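(* Given a PB instance $\langle N,P,c,b,\mathcal{A}\rangle$, let $l_o$ and $h_o$ be respectively the minimum and maximum of $|O_\succ|$ over all complete orders $\succ$ on $P$, where $O_\succ$ is the output of the ordered-fill algorithm with respect to $\succ$. Then $l_o$ and $h_o$ can be computed in polynomial time.
   Context: A PB instance is $\langle N,P,c,b,\mathcal{A}\rangle$ with voters $N$, projects $P=\{p_1,\dots,p_m\}$, costs $c:P\to\mathbb{N}$, budget $b\in\mathbb{N}$, approval sets $A_i\subseteq P$; $c(S)=\sum_{p\in S}c(p)$. The ordered-fill algorithm with respect to a complete (strict linear) order $\succ$ on $P$ starts with the empty set and adds projects one by one in order from highest-ranked to lowest-ranked in $\succ$, stopping as soon as the next ranked project does not fit within the budget (i.e., adding it would make the total cost exceed $b$); its output is the set selected up to that point. *)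

From mathcomp Require Import all_boot.
From Stdlib Require Import PeanoNat.

Set Implicit Arguments.
Unset Strict Implicit.
Unset Printing Implicit Defensive.

(* Participatory budgeting: projects are 'I_m, costs c : 'I_m -> nat,  *)
(* budget b : nat.                                                      *)

(* A complete (strict linear) order on the projects; [r x y] means x ≻ y. *)
Definition strict_total_order (m : nat) (r : rel 'I_m) : Prop :=
  irreflexive r /\ transitive r /\ (forall x y, x != y -> r x y || r y x).

(* The projects listed from highest-ranked to lowest-ranked. *)
Definition ranking (m : nat) (r : rel 'I_m) : seq 'I_m :=
  sort (fun x y => (x == y) || r x y) (enum 'I_m).

Fixpoint fill_from (T : Type) (c : T -> nat) (b spent : nat) (s : seq T)
  : seq T :=
  match s with
  | [::] => [::]
  | p :: s' =>
      if spent + c p <= b then p :: fill_from c b (spent + c p) s'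
      else [::]
  end.

Definition ordered_fill (m : nat) (c : 'I_m -> nat) (b : nat) (r : rel 'I_m)
  : seq 'I_m := fill_from c b 0 (ranking r).

Definition is_lo (m : nat) (c : 'I_m -> nat) (b : nat) (l : nat) : Prop :=
  (exists r : rel 'I_m, strict_total_order r /\ size (ordered_fill c b r) = l)
  /\ (forall r : rel 'I_m, strict_total_order r -> l <= size (ordered_fill c b r)).

Definition is_ho (m : nat) (c : 'I_m -> nat) (b : nat) (h : nat) : Prop :=
  (exists r : rel 'I_m, strict_total_order r /\ size (ordered_fill c b r) = h)
  /\ (forall r : rel 'I_m, strict_total_order r -> size (ordered_fill c b r) <= h).

(* Model of computation: a RAM (while-language with indirect addressing)  *)
(* over an unbounded memory nat -> nat, with the LOGARITHMIC cost         *)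
(* criterion (every value/address handled is charged its bit length).    *)

Definition nbits (n : nat) : nat := (Nat.log2 n).+1.

Inductive aexp : Type :=
  | ANum (n : nat)
  | ALoad (a : aexp)
  | AAdd (a1 a2 : aexp)
  | ASub (a1 a2 : aexp).        (* truncated subtraction *)

Inductive bexp : Type :=
  | BLe (a1 a2 : aexp)
  | BNot (e : bexp)
  | BAnd (e1 e2 : bexp).

Inductive com : Type :=
  | CSkip
  | CStore (a1 a2 : aexp)       (* mem[a1] := a2 *)
  | CSeq (c1 c2 : com)
  | CIf (e : bexp) (c1 c2 : com)
  | CWhile (e : bexp) (body : com).

Fixpoint aeval (mem : nat -> nat) (a : aexp) : nat * nat :=
  match a with
  | ANum n => (n, nbits n)
  | ALoad a' =>
      let (v, k) := aeval mem a' in (mem v, k + nbits v + nbits (mem v))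
  | AAdd a1 a2 =>
      let (v1, k1) := aeval mem a1 in
      let (v2, k2) := aeval mem a2 in
      (v1 + v2, k1 + k2 + nbits (v1 + v2))
  | ASub a1 a2 =>
      let (v1, k1) := aeval mem a1 in
      let (v2, k2) := aeval mem a2 in
      (v1 - v2, k1 + k2 + nbits v1 + nbits v2)
  end.

Fixpoint beval (mem : nat -> nat) (e : bexp) : bool * nat :=
  match e with
  | BLe a1 a2 =>
      let (v1, k1) := aeval mem a1 in
      let (v2, k2) := aeval mem a2 in
      (v1 <= v2, k1 + k2 + nbits v1 + nbits v2)
  | BNot e' => let (v, k) := beval mem e' in (~~ v, k.+1)
  | BAnd e1 e2 =>
      let (v1, k1) := beval mem e1 in
      let (v2, k2) := beval mem e2 in
      (v1 && v2, (k1 + k2).+1)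
  end.

(* Big-step execution with fuel (fuel only guarantees termination of the
   definition); returns final memory and total cost. *)
Fixpoint exec (fuel : nat) (c : com) (mem : nat -> nat)
  : option ((nat -> nat) * nat) :=
  match fuel with
  | 0 => None
  | f.+1 =>
    match c with
    | CSkip => Some (mem, 1)
    | CStore a1 a2 =>
        let (addr, k1) := aeval mem a1 in
        let (v, k2) := aeval mem a2 in
        Some ((fun i => if i == addr then v else mem i), (k1 + k2).+1)
    | CSeq c1 c2 =>
        match exec f c1 mem with
        | Some (m1, k1) =>
            match exec f c2 m1 with
            | Some (m2, k2) => Some (m2, k1 + k2)
            | None => None
            end
        | None => None
        end
    | CIf e c1 c2 =>
        let (v, k) := beval mem e in
        match exec f (if v then c1 else c2) mem with
        | Some (m1, k1) => Some (m1, (k + k1).+1)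
        | None => None
        end
    | CWhile e body =>
        let (v, k) := beval mem e in
        if v then
          match exec f body mem with
          | Some (m1, k1) =>
              match exec f (CWhile e body) m1 with
              | Some (m2, k2) => Some (m2, (k + k1 + k2).+1)
              | None => None
              end
          | None => None
          end
        else Some (mem, k.+1)
    end
  end.

Definition runs_to (p : com) (mem0 : nat -> nat) (out T : nat) : Prop :=
  exists fuel mem' cost,
    exec fuel p mem0 = Some (mem', cost) /\ cost <= T /\ mem' 0 = out.

Definition pb_input (m : nat) (c : 'I_m -> nat) (b : nat) : nat -> nat :=
  fun i => if i == 0 then m else if i == 1 then b
           else nth 0 [seq c p | p <- enum 'I_m] (i - 2).

(* Input length in bits (up to constant factors). *)
Definition pb_size (m : nat) (c : 'I_m -> nat) (b : nat) : nat :=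
  m + nbits b + \sum_(p < m) nbits (c p).

(* For any order, the ordered fill keeps exactly the projects x whose cumulative
   cost (that of x and of all projects ranked above it) fits in the budget.  If
   the fill along some order keeps k projects, these cost at most b, and by an
   exchange argument the k cheapest projects cost no more; so filling
   cheapest-first (ties broken by index) keeps at least k projects and its
   output size is h_o; dually, filling costliest-first gives l_o.  A RAM
   computes either count by two nested loops over the projects, i.e. O(m^2)
   steps; every value it handles stays below m + b + sum c + 10, so under the
   logarithmic cost criterion each step costs O(input size), and the total is
   O(size^3). *)

From Stdlib Require Import PeanoNat.
From mathcomp Require Import all_boot zify.

Set Implicit Arguments.
Unset Strict Implicit.
Unset Printing Implicit Defensive.

(** * Extremal orders for the ordered fill *)

Section FillFrom.
Variables (T : Type) (c : T -> nat) (b : nat).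

Lemma size_fill_from spent s : size (fill_from c b spent s) <= size s.
Proof.
elim: s spent => //= p s IH spent.
by case: ifP => //= _; rewrite ltnS IH.
Qed.

Lemma leq_size_fill_from spent s k : spent <= b -> k <= size s ->
  (k <= size (fill_from c b spent s)) = (spent + \sum_(x <- take k s) c x <= b).
Proof.
elim: s spent k => [|p s IH] spent [|k] //= le_sb; rewrite ?big_nil ?addn0 ?le_sb //.
rewrite ltnS big_cons addnA => le_ks; case: ifP => [fits|/negbT]; first exact: IH.
by rewrite -ltnNge => /leq_trans/(_ (leq_addr _ _))/ltn_geF ->.
Qed.

Lemma size_fill_from_sum s :
  size (fill_from c b 0 s) = \sum_(0 <= k < size s) (\sum_(x <- take k.+1 s) c x <= b).
Proof.
have le_F := size_fill_from 0 s; set F := size _ in le_F *.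
under eq_big_nat => k /andP [_ lt_ks].
  rewrite -[X in X <= b]add0n -(leq_size_fill_from (leq0n b) lt_ks).
over.
rewrite -big_mkcond sum1_count /index_iota subn0 -size_filter.
by rewrite (filter_iota_ltn 0 le_F) size_iota.
Qed.

End FillFrom.

Definition rle (T : eqType) (r : rel T) : rel T := fun x y => (x == y) || r x y.

Lemma rle_refl (T : eqType) (r : rel T) : reflexive (rle r).
Proof. by move=> x; rewrite /rle eqxx. Qed.

Section Ranking.
Variables (m : nat) (r : rel 'I_m).

Lemma perm_ranking : perm_eq (ranking r) (enum 'I_m).
Proof. by rewrite /ranking perm_sort. Qed.

Lemma uniq_ranking : uniq (ranking r).
Proof. by rewrite (perm_uniq perm_ranking) enum_uniq. Qed.

Lemma size_ranking : size (ranking r) = m.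
Proof. by rewrite (perm_size perm_ranking) size_enum_ord. Qed.

Lemma mem_ranking x : x \in ranking r.
Proof. by rewrite (perm_mem perm_ranking) mem_enum. Qed.

Hypothesis r_order : strict_total_order r.

Lemma rle_trans : transitive (rle r).
Proof.
have [_ [r_trans _]] := r_order.
move=> z y x; rewrite /rle => /orP [/eqP -> //|r_yz] /orP [/eqP <-|r_zx].
  by rewrite r_yz orbT.
by rewrite (r_trans _ _ _ r_yz r_zx) orbT.
Qed.

Lemma rle_anti : antisymmetric (rle r).
Proof.
have [r_irr [r_trans _]] := r_order.
move=> x y; rewrite /rle eq_sym; case: eqP => //= _ /andP [r_xy r_yx].
by have := r_irr x; rewrite (r_trans _ _ _ r_xy r_yx).
Qed.

Lemma sorted_ranking : sorted (rle r) (ranking r).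
Proof.
have [_ [_ r_total]] := r_order.
apply: sort_sorted => x y; rewrite /rle eq_sym; case: eqVneq => //= ne_yx.
by rewrite orbC r_total // eq_sym.
Qed.

Lemma rle_ranking_index y x :
  rle r y x = (index y (ranking r) <= index x (ranking r)).
Proof.
have le_index := sorted_leq_index rle_trans (@rle_refl _ r) sorted_ranking.
case: leqP => [le_yx|lt_xy]; first by apply: le_index; rewrite ?mem_ranking.
apply/negbTE/negP => le_r_yx.
have le_r_xy : rle r x y by apply: le_index; [exact: mem_ranking..| exact: ltnW].
by move: lt_xy; rewrite (rle_anti (introT andP (conj le_r_xy le_r_yx))) ltnn.
Qed.

End Ranking.

Lemma size_ordered_fill m (c : 'I_m -> nat) b r : strict_total_order r ->
  size (ordered_fill c b r) = \sum_(x : 'I_m) (\sum_(y | rle r y x) c y <= b).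
Proof.
move=> r_order; rewrite /ordered_fill size_fill_from_sum size_ranking.
case: (posnP m) => [m0|m_gt0].
  by rewrite big_geq ?m0 // big1 // => x; have := ltn_ord x; rewrite {2}m0.
pose x0 := Ordinal m_gt0; set s := ranking r.
rewrite -big_enum /= -(perm_big _ (perm_ranking r)) (big_nth x0) size_ranking.
apply: eq_big_nat => k /andP [_ lt_km]; congr (nat_of_bool (_ <= b)).
rewrite big_uniq ?take_uniq ?uniq_ranking //; apply: eq_bigl => y.
rewrite rle_ranking_index // index_uniq ?size_ranking ?uniq_ranking //.
by rewrite in_take ?mem_ranking.
Qed.

Lemma leq_sum_exchange (T : finType) (c : T -> nat) (A B : {set T}) :
  #|A| = #|B| -> (forall u v, u \in A :\: B -> v \in B :\: A -> c u <= c v) ->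
  \sum_(u in A) c u <= \sum_(v in B) c v.
Proof.
move=> eq_card le_AB.
rewrite (big_setID B) (big_setID A (A := B)) /= setIC leq_add2l.
have eq_cardD : #|A :\: B| = #|B :\: A|.
  by have := cardsID B A; have := cardsID A B; rewrite setIC; lia.
apply: (@leq_trans (#|A :\: B| * \max_(u in A :\: B) c u)).
  by rewrite -sum_nat_const; apply: leq_sum => u Au; apply: leq_bigmax_cond.
rewrite eq_cardD -sum_nat_const; apply: leq_sum => v Bv.
by apply/bigmax_leqP => u Au; apply: le_AB.
Qed.

Section OrderedFillExtremal.
Variables (m : nat) (c : 'I_m -> nat) (b : nat).

Let prefix (r : rel 'I_m) k := [set y in take k (ranking r)].

Lemma card_prefix r k : k <= m -> #|prefix r k| = k.
Proof.
move=> le_km; rewrite cardsE (card_uniqP (take_uniq k (uniq_ranking r))).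
by rewrite size_take size_ranking; case: ltngtP le_km => //; lia.
Qed.

Lemma sum_prefix r k : \sum_(y <- take k (ranking r)) c y = \sum_(y in prefix r k) c y.
Proof.
by rewrite big_uniq ?take_uniq ?uniq_ranking //; apply: eq_bigl => y; rewrite inE.
Qed.

Lemma ordered_fill_prefix r k : k <= m ->
  (k <= size (ordered_fill c b r)) = (\sum_(y in prefix r k) c y <= b).
Proof.
by move=> le_km; rewrite -sum_prefix -[X in X <= b]add0n leq_size_fill_from ?size_ranking.
Qed.

Lemma size_ordered_fill_le r : size (ordered_fill c b r) <= m.
Proof. by have := size_fill_from c b 0 (ranking r); rewrite size_ranking. Qed.

Lemma rle_prefix r k u v : strict_total_order r ->
  u \in prefix r k -> v \notin prefix r k -> rle r u v.
Proof.
move=> r_order; rewrite !inE !in_take ?mem_ranking // rle_ranking_index // -leqNgt.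
by move=> lt_uk le_kv; apply/ltnW/(leq_trans lt_uk le_kv).
Qed.

Lemma ordered_fill_size_mono r r' :
  (forall k, k <= m -> \sum_(y in prefix r' k) c y <= \sum_(y in prefix r k) c y) ->
  size (ordered_fill c b r) <= size (ordered_fill c b r').
Proof.
move=> le_sum; have le_km := size_ordered_fill_le r.
by rewrite ordered_fill_prefix // (leq_trans (le_sum _ le_km)) // -ordered_fill_prefix.
Qed.

Lemma ordered_fill_size_max r0 r : strict_total_order r0 ->
  (forall x y, rle r0 x y -> c x <= c y) ->
  size (ordered_fill c b r) <= size (ordered_fill c b r0).
Proof.
move=> r0_order c_mono; apply: ordered_fill_size_mono => k le_km.
apply: leq_sum_exchange; first by rewrite !card_prefix.
by move=> u v /setDP [u_in _] /setDP [_ v_out]; exact/c_mono/(rle_prefix r0_order u_in v_out).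
Qed.

Lemma ordered_fill_size_min r0 r : strict_total_order r0 ->
  (forall x y, rle r0 x y -> c y <= c x) ->
  size (ordered_fill c b r0) <= size (ordered_fill c b r).
Proof.
move=> r0_order c_anti; apply: ordered_fill_size_mono => k le_km.
apply: leq_sum_exchange; first by rewrite !card_prefix.
by move=> u v /setDP [_ u_out] /setDP [v_in _]; exact/c_anti/(rle_prefix r0_order v_in u_out).
Qed.

End OrderedFillExtremal.

Lemma strict_total_order_rev m (r : rel 'I_m) :
  strict_total_order r -> strict_total_order [rel x y | r y x].
Proof.
move=> [r_irr [r_trans r_total]]; split; [|split] => //.
- by move=> y x z r_yx r_zy; apply: r_trans r_zy r_yx.
- by move=> x y /r_total; rewrite orbC.
Qed.

Section CheapestFirst.
Variables (m : nat) (c : 'I_m -> nat).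

Definition cheaper : rel 'I_m := fun x y => (c x < c y) || (c x == c y) && (x < y).

Lemma rle_cheaperE x y : rle cheaper x y = (c x < c y) || (c x == c y) && (x <= y).
Proof.
rewrite /rle /cheaper; case: eqVneq => [->|ne_xy]; first by rewrite ltnn eqxx leqnn.
have /negbTE ne_val : nat_of_ord x != y := ne_xy.
by rewrite [(x <= y)%N]leq_eqVlt ne_val.
Qed.

Lemma cheaper_order : strict_total_order cheaper.
Proof.
rewrite /cheaper; split; [|split].
- by move=> x; rewrite !ltnn andbF.
- move=> y x z; lia.
- move=> x y; rewrite -val_eqE; case: ltngtP => //= _.
  by rewrite eq_sym; case: ltngtP.
Qed.

Lemma is_ho_cheaper b : is_ho c b (size (ordered_fill c b cheaper)).
Proof.
split; first by exists cheaper; split => //; apply: cheaper_order.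
move=> r _; apply: ordered_fill_size_max cheaper_order _ => x y.
by rewrite rle_cheaperE => /orP [/ltnW|/andP [/eqP -> _]].
Qed.

Lemma is_lo_costlier b : is_lo c b (size (ordered_fill c b [rel x y | cheaper y x])).
Proof.
have costlier_order := strict_total_order_rev cheaper_order.
split; first by exists [rel x y | cheaper y x].
move=> r _; apply: ordered_fill_size_min costlier_order _ => x y.
rewrite /rle /= eq_sym -/(rle cheaper y x) rle_cheaperE.
by case/orP => [/ltnW|/andP [/eqP -> _]].
Qed.

End CheapestFirst.

(** * Logarithmic cost of expressions *)

Lemma expn_Nat_pow a n : a ^ n = Nat.pow a n.
Proof. by elim: n => [|n IH] //; rewrite expnS IH Nat.pow_succ_r'. Qed.

Lemma leq_nbits x y : x <= y -> nbits x <= nbits y.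
Proof. by move=> /leP le_xy; rewrite ltnS; apply/leP/Nat.log2_le_mono. Qed.

Lemma nbits_mul_exp2 V s : 0 < V -> nbits (V * 2 ^ s) = s + nbits V.
Proof.
by move=> V_gt0; rewrite /nbits expn_Nat_pow -multE Nat.log2_mul_pow2; lia.
Qed.

Lemma nbits_leq_mul_exp2 x V s : 0 < V -> x <= V * 2 ^ s -> nbits x <= s + nbits V.
Proof. by move=> V_gt0 /leq_nbits; rewrite nbits_mul_exp2. Qed.

Lemma nbits_leq_of_ltn x e : 0 < e -> x < 2 ^ e -> nbits x <= e.
Proof.
case: x => // x e_gt0 /ltP; rewrite expn_Nat_pow => lt_xe.
by apply/ltP/Nat.log2_lt_pow2 => //; lia.
Qed.

Lemma ltn_exp2_nbits x : x < 2 ^ nbits x.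
Proof.
case: x => // x; have [_ /ltP] := Nat.log2_spec x.+1 (ltac:(lia)).
by rewrite -!expn_Nat_pow.
Qed.

Lemma ltn_add_exp2 x y a b : x < 2 ^ a -> y < 2 ^ b -> x + y < 2 ^ (a + b).
Proof.
move=> lt_xa lt_yb; rewrite expnD.
have := expn_gt0 2 a; have := expn_gt0 2 b; nia.
Qed.

Fixpoint asize (a : aexp) : nat :=
  match a with
  | ANum _ => 1
  | ALoad a => (asize a).+1
  | AAdd a1 a2 | ASub a1 a2 => (asize a1 + asize a2).+1
  end.

Fixpoint amaxnum (a : aexp) : nat :=
  match a with
  | ANum n => n
  | ALoad a => amaxnum a
  | AAdd a1 a2 | ASub a1 a2 => maxn (amaxnum a1) (amaxnum a2)
  end.

Fixpoint bsize (e : bexp) : nat :=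
  match e with
  | BLe a1 a2 => (asize a1 + asize a2).+1
  | BNot e => (bsize e).+1
  | BAnd e1 e2 => (bsize e1 + bsize e2).+1
  end.

Fixpoint bmaxnum (e : bexp) : nat :=
  match e with
  | BLe a1 a2 => maxn (amaxnum a1) (amaxnum a2)
  | BNot e => bmaxnum e
  | BAnd e1 e2 => maxn (bmaxnum e1) (bmaxnum e2)
  end.

Lemma aeval_loadE mem a : (aeval mem (ALoad a)).1 = mem (aeval mem a).1.
Proof. by rewrite /=; case: (aeval mem a). Qed.

Lemma aeval_addE mem a1 a2 :
  (aeval mem (AAdd a1 a2)).1 = (aeval mem a1).1 + (aeval mem a2).1.
Proof. by rewrite /=; case: (aeval mem a1); case: (aeval mem a2). Qed.

Lemma beval_leE mem a1 a2 :
  (beval mem (BLe a1 a2)).1 = ((aeval mem a1).1 <= (aeval mem a2).1).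
Proof. by rewrite /=; case: (aeval mem a1); case: (aeval mem a2). Qed.

Lemma beval_notE mem e : (beval mem (BNot e)).1 = ~~ (beval mem e).1.
Proof. by rewrite /=; case: (beval mem e). Qed.

Lemma beval_andE mem e1 e2 :
  (beval mem (BAnd e1 e2)).1 = (beval mem e1).1 && (beval mem e2).1.
Proof. by rewrite /=; case: (beval mem e1); case: (beval mem e2). Qed.

Definition bevalE := (beval_leE, beval_notE, beval_andE).

Section EvalCost.
Variables (V : nat) (mem : nat -> nat).
Hypotheses (V_gt0 : 0 < V) (mem_le : forall i, mem i <= V).

(* Each operation at most doubles the values involved, whence [V * 2 ^ asize a]. *)
Lemma aeval_bounded a : amaxnum a <= V ->
  (aeval mem a).1 <= V * 2 ^ asize a /\
  (aeval mem a).2 <= 4 * asize a * (asize a + nbits V).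
Proof.
have pos n : 0 < 2 ^ n by rewrite expn_gt0.
elim: a => [n|a IH|a1 IH1 a2 IH2|a1 IH1 a2 IH2] /= le_aV.
- by have := leq_nbits le_aV; split; lia.
- have [] := IH le_aV; case: (aeval mem a) => v k /= le_v le_k.
  have := nbits_leq_mul_exp2 V_gt0 le_v; have := leq_nbits (mem_le v).
  have := mem_le v; have := pos (asize a); split; nia.
- have [] := IH1 (leq_trans (leq_maxl _ _) le_aV).
  have [] := IH2 (leq_trans (leq_maxr _ _) le_aV).
  case: (aeval mem a1) => v1 k1; case: (aeval mem a2) => v2 k2 /= le_v2 le_k2 le_v1 le_k1.
  have le_sum : v1 + v2 <= V * 2 ^ (asize a1 + asize a2).+1.
    rewrite expnS expnD; have := pos (asize a1); have := pos (asize a2); nia.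
  by have := nbits_leq_mul_exp2 V_gt0 le_sum; split => //; nia.
- have [] := IH1 (leq_trans (leq_maxl _ _) le_aV).
  have [] := IH2 (leq_trans (leq_maxr _ _) le_aV).
  case: (aeval mem a1) => v1 k1; case: (aeval mem a2) => v2 k2 /= le_v2 le_k2 le_v1 le_k1.
  have := nbits_leq_mul_exp2 V_gt0 le_v1; have := nbits_leq_mul_exp2 V_gt0 le_v2.
  rewrite expnS expnD; have := pos (asize a1); have := pos (asize a2); split; nia.
Qed.

Lemma beval_cost_le e : bmaxnum e <= V ->
  (beval mem e).2 <= 4 * bsize e * (bsize e + nbits V).
Proof.
elim: e => [a1 a2|e IH|e1 IH1 e2 IH2] /= le_eV.
- have [le_v1 le_k1] := aeval_bounded (leq_trans (leq_maxl _ _) le_eV).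
  have [le_v2 le_k2] := aeval_bounded (leq_trans (leq_maxr _ _) le_eV).
  move: le_v1 le_k1 le_v2 le_k2.
  case: (aeval mem a1) => v1 k1; case: (aeval mem a2) => v2 k2 /= le_v1 le_k1 le_v2 le_k2.
  have := nbits_leq_mul_exp2 V_gt0 le_v1; have := nbits_leq_mul_exp2 V_gt0 le_v2; nia.
- by have := IH le_eV; case: (beval mem e) => v k /=; nia.
- have := IH1 (leq_trans (leq_maxl _ _) le_eV).
  have := IH2 (leq_trans (leq_maxr _ _) le_eV).
  by case: (beval mem e1) => v1 k1; case: (beval mem e2) => v2 k2 /=; nia.
Qed.

End EvalCost.

(** * Hoare triples with cost bounds *)

Lemma exec_fuel_mono f f' p mem res :
  f <= f' -> exec f p mem = Some res -> exec f' p mem = Some res.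
Proof.
elim: f f' p mem res => [|f IH] [|f'] p mem res //= le_ff'.
case: p => //= [c1 c2|e c1 c2|e body].
- case E1: (exec f c1 mem) => [[m1 k1]|] //; rewrite (IH _ _ _ _ le_ff' E1).
  by case E2: (exec f c2 m1) => [[m2 k2]|] //; rewrite (IH _ _ _ _ le_ff' E2).
- case: (beval mem e) => v k.
  by case E1: (exec f _ mem) => [[m1 k1]|] //; rewrite (IH _ _ _ _ le_ff' E1).
- case: (beval mem e) => [[] k] //.
  case E1: (exec f body mem) => [[m1 k1]|] //; rewrite (IH _ _ _ _ le_ff' E1).
  case E2: (exec f (CWhile e body) m1) => [[m2 k2]|] //.
  by rewrite (IH _ _ _ _ le_ff' E2).
Qed.

Definition triple (P : (nat -> nat) -> Prop) (p : com) (Q : (nat -> nat) -> Prop)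
    (K : nat) : Prop :=
  forall mem, P mem ->
    exists f mem' k, exec f p mem = Some (mem', k) /\ k <= K /\ Q mem'.

Lemma triple_runs_to P p mem0 out K :
  triple P p (fun mem => mem 0 = out) K -> P mem0 -> runs_to p mem0 out K.
Proof. by move=> hp /hp. Qed.

Lemma triple_conseq P P' p Q Q' K K' :
  triple P p Q K -> (forall mem, P' mem -> P mem) ->
  (forall mem, Q mem -> Q' mem) -> K <= K' -> triple P' p Q' K'.
Proof.
move=> hp PP' QQ' KK' mem /PP' /hp [f [mem' [k [E [le_kK /QQ' Q'mem]]]]].
by exists f, mem', k; split=> //; split=> //; apply: leq_trans KK'.
Qed.

Lemma triple_cost_le K P p Q K' : K <= K' -> triple P p Q K -> triple P p Q K'.
Proof. by move=> le_KK' hp; apply: triple_conseq hp _ _ le_KK'. Qed.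

Lemma triple_pre_false P p Q K : (forall mem, ~ P mem) -> triple P p Q K.
Proof. by move=> notP mem /notP. Qed.

Lemma triple_skip P : triple P CSkip P 1.
Proof. by move=> mem Pmem; exists 1, mem, 1. Qed.

Lemma triple_store P a1 a2 Q K :
  (forall mem, P mem ->
     Q (fun i => if i == (aeval mem a1).1 then (aeval mem a2).1 else mem i) /\
     ((aeval mem a1).2 + (aeval mem a2).2).+1 <= K) ->
  triple P (CStore a1 a2) Q K.
Proof.
move=> hst mem /hst hmem; exists 1; move: hmem => /=.
case: (aeval mem a1) => addr k1; case: (aeval mem a2) => v k2 /= [Qmem le_kK].
by exists (fun i => if i == addr then v else mem i), (k1 + k2).+1.
Qed.

Lemma triple_seq P R Q c1 c2 K1 K2 :
  triple P c1 R K1 -> triple R c2 Q K2 -> triple P (CSeq c1 c2) Q (K1 + K2).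
Proof.
move=> h1 h2 mem /h1 [f1 [m1 [k1 [E1 [le1 /h2 [f2 [m2 [k2 [E2 [le2 Qm2]]]]]]]]]].
exists (maxn f1 f2).+1, m2, (k1 + k2) => /=.
rewrite (exec_fuel_mono (leq_maxl f1 f2) E1) (exec_fuel_mono (leq_maxr f1 f2) E2).
by split; last split; rewrite ?leq_add.
Qed.

Lemma triple_if P e c1 c2 Q Ke K :
  (forall mem, P mem -> (beval mem e).2 <= Ke) ->
  triple (fun mem => P mem /\ (beval mem e).1) c1 Q K ->
  triple (fun mem => P mem /\ ~~ (beval mem e).1) c2 Q K ->
  triple P (CIf e c1 c2) Q (Ke + K).+1.
Proof.
move=> hKe h1 h2 mem Pmem.
have [f [m1 [k1 [E [le_k1 Qm1]]]]] : exists f mem' k,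
    exec f (if (beval mem e).1 then c1 else c2) mem = Some (mem', k) /\ k <= K /\ Q mem'.
  by case: ifP => ev; [apply: h1 | apply: h2]; rewrite ?ev.
exists f.+1, m1; move: E (hKe _ Pmem) => /=.
case: (beval mem e) => v k /= -> le_kKe.
by exists (k + k1).+1; rewrite ltnS leq_add.
Qed.

Lemma triple_while (Inv : nat -> (nat -> nat) -> Prop) e body N Ke Kb :
  (forall i mem, i <= N -> Inv i mem ->
     (beval mem e).1 = (i < N) /\ (beval mem e).2 <= Ke) ->
  (forall i, i < N -> triple (Inv i) body (Inv i.+1) Kb) ->
  triple (Inv 0) (CWhile e body) (Inv N) (N.+1 * (Ke + Kb).+1).
Proof.
move=> hguard hbody.
suff loop d i : i + d = N ->
    triple (Inv i) (CWhile e body) (Inv N) (d.+1 * (Ke + Kb).+1) by exact: loop.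
elim: d i => [|d IH] i def_N mem Inv_i.
  rewrite addn0 in def_N; subst i.
  have [ev le_k] := hguard N mem (leqnn N) Inv_i.
  exists 1, mem; move: ev le_k => /=; case: (beval mem e) => v k /= -> le_k.
  by rewrite ltnn; exists k.+1; split => //; split => //; lia.
have lt_iN : i < N by lia.
have [ev le_k] := hguard i mem (ltnW lt_iN) Inv_i.
have [f1 [m1 [k1 [E1 [le_k1 /(IH i.+1) Inv_N]]]]] := hbody i lt_iN mem Inv_i.
have [f2 [m2 [k2 [E2 [le_k2 Qm2]]]]] := Inv_N (etrans (addSnnS i d) def_N).
exists (maxn f1 f2).+1, m2; move: ev le_k => /=; case: (beval mem e) => v k /= -> le_k.
rewrite lt_iN (exec_fuel_mono (leq_maxl f1 f2) E1) (exec_fuel_mono (leq_maxr f1 f2) E2).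
exists (k + k1 + k2).+1; split=> //; split=> //; nia.
Qed.

(** * The counting program *)

(* Memory layout: cell 0 holds m, cell 1 the budget, cell [2 + y] the cost of
   project y, and cells [m + 2 + k], k < 4, the registers x, y, s, count. *)
Definition num_projects : aexp := ALoad (ANum 0).
Definition budget : aexp := ALoad (ANum 1).
Definition reg_addr (k : nat) : aexp := AAdd num_projects (ANum (2 + k)).
Definition reg (k : nat) : aexp := ALoad (reg_addr k).
Definition cost_at (a : aexp) : aexp := ALoad (AAdd (ANum 2) a).

Definition lex_cost (cn : nat -> nat) : rel nat :=
  fun y x => (cn y < cn x) || (cn y == cn x) && (y <= x).

(* [lex_cost] written with the only connectives of [bexp]: [<=], [~~] and [&&]. *)
Definition blex_cost (ey ex : aexp) : bexp :=
  BAnd (BLe (cost_at ey) (cost_at ex))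
       (BNot (BAnd (BLe (cost_at ex) (cost_at ey)) (BNot (BLe ey ex)))).

Definition prefix_sum_step (cnd : bexp) : com :=
  CSeq (CIf cnd (CStore (reg_addr 2) (AAdd (reg 2) (cost_at (reg 1)))) CSkip)
       (CStore (reg_addr 1) (AAdd (reg 1) (ANum 1))).

Definition prefix_sum_loop (cnd : bexp) : com :=
  CWhile (BNot (BLe num_projects (reg 1))) (prefix_sum_step cnd).

Definition count_body (cnd : bexp) : com :=
  CSeq (prefix_sum_loop cnd)
  (CSeq (CIf (BLe (reg 2) budget) (CStore (reg_addr 3) (AAdd (reg 3) (ANum 1))) CSkip)
  (CSeq (CStore (reg_addr 0) (AAdd (reg 0) (ANum 1)))
  (CSeq (CStore (reg_addr 1) (ANum 0))
        (CStore (reg_addr 2) (ANum 0))))).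

Definition count_prog (cnd : bexp) : com :=
  CSeq (CWhile (BNot (BLe num_projects (reg 0))) (count_body cnd))
       (CStore (ANum 0) (reg 3)).

Definition atom_cost (V : nat) : nat := 200 * (50 + nbits V).

Lemma atom_cost_gt0 V : 0 < atom_cost V.
Proof. by []. Qed.

Section Layout.
Variables (m b V : nat) (cn : nat -> nat).

Record layout (mem : nat -> nat) (regs : seq nat) : Prop := {
  layout_m : mem 0 = m;
  layout_b : mem 1 = b;
  layout_cost : forall y, y < m -> mem (2 + y) = cn y;
  layout_reg : forall k, k < 4 -> mem (m + (2 + k)) = nth 0 regs k;
  layout_bounded : forall i, mem i <= V }.

Lemma layout_store mem regs k v : layout mem regs -> k < 4 -> v <= V ->
  layout (fun i => if i == m + (2 + k) then v else mem i) (set_nth 0 regs k v).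
Proof.
case=> mem0 mem1 mem_cost mem_reg mem_le lt_k4 le_vV; split => [|||k' lt_k'4|i] /=.
- by case: ifP => /eqP; [lia | rewrite mem0].
- by case: ifP => /eqP; [lia | rewrite mem1].
- by move=> y lt_ym; case: ifP => /eqP; [lia | rewrite mem_cost].
- by rewrite nth_set_nth /= eqn_add2l eqn_add2l; case: eqP => // _; apply: mem_reg.
- by case: ifP.
Qed.

Section Values.
Variables (mem : nat -> nat) (regs : seq nat).
Hypothesis mem_layout : layout mem regs.

Lemma aeval_num_projects : (aeval mem num_projects).1 = m.
Proof. by case: mem_layout. Qed.

Lemma aeval_budget : (aeval mem budget).1 = b.
Proof. by case: mem_layout. Qed.

Lemma aeval_reg_addr k : (aeval mem (reg_addr k)).1 = m + (2 + k).
Proof. by rewrite /reg_addr aeval_addE aeval_num_projects. Qed.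

Lemma aeval_reg k : k < 4 -> (aeval mem (reg k)).1 = nth 0 regs k.
Proof. by rewrite /reg aeval_loadE aeval_reg_addr; apply: layout_reg. Qed.

Lemma aeval_cost_at a : (aeval mem a).1 < m ->
  (aeval mem (cost_at a)).1 = cn (aeval mem a).1.
Proof. by rewrite /cost_at aeval_loadE aeval_addE => /(layout_cost mem_layout). Qed.

Lemma beval_blex_cost ey ex : (aeval mem ey).1 < m -> (aeval mem ex).1 < m ->
  (beval mem (blex_cost ey ex)).1 = lex_cost cn (aeval mem ey).1 (aeval mem ex).1.
Proof.
move=> lt_ym lt_xm; rewrite /blex_cost !bevalE !aeval_cost_at //.
by rewrite /lex_cost; case: ltngtP; rewrite ?andbF ?andbT ?negbK.
Qed.

Hypothesis le_10V : 10 <= V.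

Lemma store_cost_le a1 a2 :
  asize a1 + asize a2 < 50 -> amaxnum a1 <= 10 -> amaxnum a2 <= 10 ->
  ((aeval mem a1).2 + (aeval mem a2).2).+1 <= atom_cost V.
Proof.
move=> le_size le_a1 le_a2; have V_gt0 : 0 < V by lia.
have [_ +] := aeval_bounded V_gt0 (layout_bounded mem_layout) (leq_trans le_a1 le_10V).
have [_ +] := aeval_bounded V_gt0 (layout_bounded mem_layout) (leq_trans le_a2 le_10V).
rewrite /atom_cost; nia.
Qed.

Lemma guard_cost_le e : bsize e <= 50 -> bmaxnum e <= 10 -> (beval mem e).2 <= atom_cost V.
Proof.
move=> le_size le_e; have V_gt0 : 0 < V by lia.
have := beval_cost_le V_gt0 (layout_bounded mem_layout) (leq_trans le_e le_10V).
rewrite /atom_cost; nia.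
Qed.

End Values.
End Layout.

Section CountProg.
Variables (m b V : nat) (cn : nat -> nat) (R : rel nat) (cnd : bexp).
Hypotheses (le_10V : 10 <= V) (le_mV : m <= V) (sum_cn_le : \sum_(0 <= y < m) cn y <= V).
Hypotheses (cnd_size : bsize cnd <= 50) (cnd_num : bmaxnum cnd <= 10).
Hypothesis cnd_sem : forall mem x y s n, layout m b V cn mem [:: x; y; s; n] ->
  x < m -> y < m -> (beval mem cnd).1 = R y x.

Local Notation state := (layout m b V cn).
Local Notation A := (atom_cost V).

Definition prefix_cost x j := \sum_(0 <= y < j) (if R y x then cn y else 0).
Definition fitting_count i := \sum_(0 <= x < i) (prefix_cost x m <= b).

Lemma triple_store_reg regs k a v :
  (forall mem, state mem regs -> (aeval mem a).1 = v) ->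
  k < 4 -> asize a < 46 -> amaxnum a <= 10 -> v <= V ->
  triple (state^~ regs) (CStore (reg_addr k) a) (state^~ (set_nth 0 regs k v)) A.
Proof.
move=> aeval_a lt_k4 le_size le_num le_vV; apply: triple_store => mem mem_state.
rewrite (aeval_reg_addr mem_state) (aeval_a _ mem_state); split.
  exact: layout_store.
by apply: (store_cost_le mem_state le_10V) => //=; lia.
Qed.

Lemma triple_cond_store regs k e a (t : bool) v :
  (forall mem, state mem regs -> (beval mem e).1 = t /\ (aeval mem a).1 = v) ->
  k < 4 -> bsize e <= 50 -> bmaxnum e <= 10 -> asize a < 46 -> amaxnum a <= 10 -> v <= V ->
  triple (state^~ regs) (CIf e (CStore (reg_addr k) a) CSkip)
         (state^~ (if t then set_nth 0 regs k v else regs)) (A + A).+1.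
Proof.
move=> sem lt_k4 le_esize le_enum le_asize le_anum le_vV.
have guard mem : state mem regs -> (beval mem e).2 <= A.
  by move=> mem_state; apply: guard_cost_le mem_state le_10V _ le_esize le_enum.
case: t sem => sem; apply: triple_if guard _ _.
- have store := triple_store_reg (fun mem L => (sem mem L).2) lt_k4 le_asize le_anum le_vV.
  by refine (triple_conseq store _ _ _) => // mem [].
- by apply: triple_pre_false => mem [/sem [->]].
- by apply: triple_pre_false => mem [/sem [->]].
- refine (triple_conseq (@triple_skip (state^~ regs)) _ _ (atom_cost_gt0 V)) => //.
  by move=> mem [].
Qed.

Lemma sum_cn_prefix_le j : j <= m -> \sum_(0 <= y < j) cn y <= V.
Proof.
by move=> le_jm; apply: leq_trans sum_cn_le; rewrite (big_cat_nat (leq0n j) le_jm) leq_addr.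
Qed.

Lemma prefix_cost_le x j : prefix_cost x j <= \sum_(0 <= y < j) cn y.
Proof. by apply: leq_sum => y _; case: ifP. Qed.

Lemma fitting_count_le i : fitting_count i <= i.
Proof.
rewrite -[X in _ <= X]subn0 -[X in _ <= X]muln1 -sum_nat_const_nat.
by apply: leq_sum => x _; apply: leq_b1.
Qed.

Lemma prefix_sum_step_spec x j n : x < m -> j < m ->
  triple (state^~ [:: x; j; prefix_cost x j; n]) (prefix_sum_step cnd)
         (state^~ [:: x; j.+1; prefix_cost x j.+1; n]) ((A + A).+1 + A).
Proof.
move=> lt_xm lt_jm.
have step : prefix_cost x j.+1 = prefix_cost x j + (if R j x then cn j else 0).
  by rewrite /prefix_cost big_nat_recr.
have le_sum : prefix_cost x j + cn j <= V.
  apply: leq_trans (sum_cn_prefix_le lt_jm); rewrite big_nat_recr //= leq_add2r.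
  exact: prefix_cost_le.
apply: (triple_seq (R := state^~ [:: x; j; prefix_cost x j.+1; n])).
  have sem mem : state mem [:: x; j; prefix_cost x j; n] ->
      (beval mem cnd).1 = R j x /\
      (aeval mem (AAdd (reg 2) (cost_at (reg 1)))).1 = prefix_cost x j + cn j.
    move=> mem_state; rewrite (cnd_sem mem_state) // aeval_addE (aeval_reg mem_state) //.
    by rewrite (aeval_cost_at mem_state) (aeval_reg mem_state).
  have := triple_cond_store (k := 2) sem isT cnd_size cnd_num isT isT le_sum.
  by move/triple_conseq; apply=> // mem /=; rewrite step; case: (R j x); rewrite ?addn0.
apply: triple_store_reg => [mem mem_state||||] //; last lia.
by rewrite aeval_addE (aeval_reg mem_state) // addn1.
Qed.

Lemma prefix_sum_loop_spec x n : x < m ->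
  triple (state^~ [:: x; 0; 0; n]) (prefix_sum_loop cnd)
         (state^~ [:: x; m; prefix_cost x m; n]) (6 * A * m.+1).
Proof.
move=> lt_xm.
apply: triple_conseq (@triple_while (fun j => state^~ [:: x; j; prefix_cost x j; n])
  _ _ m A ((A + A).+1 + A) _ (fun j => @prefix_sum_step_spec x j n lt_xm)) _ _ _ => //.
- move=> j mem le_jm mem_state; split; last exact: guard_cost_le mem_state le_10V _ _ _.
  by rewrite !bevalE (aeval_num_projects mem_state) (aeval_reg mem_state) // ltnNge.
- by move=> mem; rewrite /prefix_cost big_geq.
- have := atom_cost_gt0 V; nia.
Qed.

Lemma count_body_spec x : x < m ->
  triple (state^~ [:: x; 0; 0; fitting_count x]) (count_body cnd)
         (state^~ [:: x.+1; 0; 0; fitting_count x.+1]) (12 * A * m.+1).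
Proof.
move=> lt_xm; set pc := prefix_cost x m.
have step : fitting_count x.+1 = fitting_count x + (pc <= b) by rewrite /fitting_count big_nat_recr.
have le_count : fitting_count x + 1 <= V by have := fitting_count_le x; lia.
apply: (@triple_cost_le (6 * A * m.+1 + ((A + A).+1 + (A + (A + A))))).
  by have := atom_cost_gt0 V; nia.
apply: (triple_seq (R := state^~ [:: x; m; pc; fitting_count x])).
  exact: prefix_sum_loop_spec.
apply: (triple_seq (R := state^~ [:: x; m; pc; fitting_count x.+1])).
  have sem mem : state mem [:: x; m; pc; fitting_count x] ->
      (beval mem (BLe (reg 2) budget)).1 = (pc <= b) /\
      (aeval mem (AAdd (reg 3) (ANum 1))).1 = fitting_count x + 1.
    move=> mem_state; rewrite bevalE aeval_addE !(aeval_reg mem_state) //.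
    by rewrite (aeval_budget mem_state).
  have := triple_cond_store (k := 3) sem isT isT isT isT isT le_count.
  by move/triple_conseq; apply=> // mem /=; rewrite step; case: (pc <= b); rewrite ?addn0.
apply: (triple_seq (R := state^~ [:: x.+1; m; pc; fitting_count x.+1])).
  apply: triple_store_reg => [mem mem_state||||] //; last lia.
  by rewrite aeval_addE (aeval_reg mem_state) // addn1.
by apply: triple_seq; apply: triple_store_reg.
Qed.

Lemma count_prog_spec :
  triple (state^~ [:: 0; 0; 0; 0]) (count_prog cnd)
         (fun mem => mem 0 = fitting_count m) (15 * A * m.+1 ^ 2).
Proof.
apply: (@triple_cost_le (m.+1 * (A + 12 * A * m.+1).+1 + A)).
  by have := atom_cost_gt0 V; nia.
apply: (triple_seq (R := state^~ [:: m; 0; 0; fitting_count m])).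
  have := @triple_while (fun i => state^~ [:: i; 0; 0; fitting_count i]) _ (count_body cnd)
    m A (12 * A * m.+1).
  rewrite /fitting_count big_geq //; apply=> [i mem le_im mem_state|i /count_body_spec //].
  split; last exact: guard_cost_le mem_state le_10V _ _ _.
  by rewrite !bevalE (aeval_num_projects mem_state) (aeval_reg mem_state) // ltnNge.
apply: triple_store => mem mem_state; split; last exact: store_cost_le mem_state le_10V _ _ _ _ _.
by rewrite (aeval_reg mem_state).
Qed.

End CountProg.

(** * Running the program on a PB instance *)

Section Instance.
Variables (m : nat) (c : 'I_m -> nat) (b : nat).

Definition pb_cost (y : nat) : nat := nth 0 [seq c p | p <- enum 'I_m] y.
Definition pb_bound : nat := m + b + \sum_(p < m) c p + 10.

Lemma pb_costE (p : 'I_m) : pb_cost p = c p.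
Proof. by rewrite /pb_cost (nth_map p) ?size_enum_ord // nth_ord_enum. Qed.

Lemma pb_cost_le y : pb_cost y <= \sum_(p < m) c p.
Proof.
case: (ltnP y m) => [lt_ym|le_my].
  by rewrite (pb_costE (Ordinal lt_ym)) (bigD1 (Ordinal lt_ym)) //= leq_addr.
by rewrite /pb_cost nth_default // size_map size_enum_ord.
Qed.

Lemma sum_pb_cost : \sum_(0 <= y < m) pb_cost y = \sum_(p < m) c p.
Proof. by rewrite big_mkord; apply: eq_bigr => p _; rewrite pb_costE. Qed.

Lemma pb_input_layout : layout m b pb_bound pb_cost (pb_input c b) [:: 0; 0; 0; 0].
Proof.
have nth_out i : m <= i -> nth 0 [seq c p | p <- enum 'I_m] i = 0.
  by move=> le_mi; rewrite nth_default // size_map size_enum_ord.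
rewrite /pb_input /pb_bound; split => //= [y lt_ym|k lt_k4|i].
- by rewrite subn2.
- rewrite !ifN_eq ?nth_out ?nth_nseq; [| lia | lia | lia].
  by case: k lt_k4 => [|[|[|[|]]]].
- have := pb_cost_le (i - 2); rewrite /pb_cost.
  case: ifP => _; [lia | case: ifP => _; [lia | move=> le_cS]].
  exact: leq_trans le_cS (leq_trans (leq_addl (m + b) _) (leq_addr 10 _)).
Qed.

Lemma nbits_pb_bound : nbits pb_bound <= pb_size c b + 4.
Proof.
have lt_sum : \sum_(p < m) c p < 2 ^ (\sum_(p < m) nbits (c p)).
  apply: (big_rec2 (fun x e => x < 2 ^ e)) => // p x e _.
  exact: ltn_add_exp2 (ltn_exp2_nbits _).
apply: nbits_leq_of_ltn; first by rewrite addn_gt0 orbT.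
rewrite /pb_bound /pb_size.
apply: ltn_add_exp2 (_ : 10 < 2 ^ 4) => //.
exact: ltn_add_exp2 (ltn_add_exp2 (ltn_expl m (isT : 1 < 2)) (ltn_exp2_nbits b)) lt_sum.
Qed.

Lemma count_cost_le :
  15 * atom_cost pb_bound * m.+1 ^ 2 <= 15 * 200 * 54 * (pb_size c b).+1 ^ 3.
Proof.
have le_m : m.+1 <= (pb_size c b).+1 by rewrite ltnS /pb_size -addnA leq_addr.
have le_A : atom_cost pb_bound <= 200 * 54 * (pb_size c b).+1.
  by have := nbits_pb_bound; rewrite /atom_cost; lia.
rewrite !expnS expn0 !muln1.
apply: leq_trans (leq_mul (leq_mul (leqnn 15) le_A) (leq_mul le_m le_m)) _.
by rewrite !mulnA.
Qed.

Lemma fitting_count_ordered_fill (r : rel 'I_m) (R : rel nat) :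
  strict_total_order r -> (forall x y : 'I_m, R y x = rle r y x) ->
  fitting_count m b pb_cost R m = size (ordered_fill c b r).
Proof.
move=> r_order eq_R; rewrite size_ordered_fill // /fitting_count big_mkord.
apply: eq_bigr => x _; congr (nat_of_bool (_ <= b)).
rewrite /prefix_cost big_mkord [RHS]big_mkcond; apply: eq_bigr => y _.
by rewrite eq_R pb_costE.
Qed.

Lemma rle_cheaper_lex_cost (x y : 'I_m) : rle (cheaper c) y x = lex_cost pb_cost y x.
Proof. by rewrite rle_cheaperE /lex_cost !pb_costE. Qed.

Lemma count_prog_runs (r : rel 'I_m) (R : rel nat) (cnd : bexp) :
  strict_total_order r -> (forall x y : 'I_m, R y x = rle r y x) ->
  bsize cnd <= 50 -> bmaxnum cnd <= 10 ->
  (forall mem x y s n, layout m b pb_bound pb_cost mem [:: x; y; s; n] ->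
     x < m -> y < m -> (beval mem cnd).1 = R y x) ->
  runs_to (count_prog cnd) (pb_input c b) (size (ordered_fill c b r))
          (15 * 200 * 54 * (pb_size c b).+1 ^ 3).
Proof.
move=> r_order eq_R cnd_size cnd_num cnd_sem.
have le_10V : 10 <= pb_bound by rewrite leq_addl.
have le_mV : m <= pb_bound by rewrite /pb_bound -!addnA leq_addr.
have le_sumV : \sum_(0 <= y < m) pb_cost y <= pb_bound.
  by rewrite sum_pb_cost /pb_bound addnC addnA leq_addl.
apply: triple_runs_to pb_input_layout.
rewrite -(fitting_count_ordered_fill r_order eq_R).
apply: triple_cost_le count_cost_le _.
exact: count_prog_spec le_10V le_mV le_sumV cnd_size cnd_num cnd_sem.
Qed.

End Instance.

Theorem lemma2 :
  exists (prog_l prog_h : com) (C k : nat),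
    forall (n m : nat) (c : 'I_m -> nat) (b : nat) (A : 'I_n -> {set 'I_m}),
      (exists l, is_lo c b l /\ runs_to prog_l (pb_input c b) l (C * (pb_size c b).+1 ^ k)) /\
      (exists h, is_ho c b h /\ runs_to prog_h (pb_input c b) h (C * (pb_size c b).+1 ^ k)).
Proof.
exists (count_prog (blex_cost (reg 0) (reg 1))), (count_prog (blex_cost (reg 1) (reg 0))).
exists (15 * 200 * 54), 3 => n m c b _; split.
- exists (size (ordered_fill c b [rel x y | cheaper c y x])); split; first exact: is_lo_costlier.
  apply: (count_prog_runs (R := fun y x => lex_cost (pb_cost c) x y)) => //.
  + exact/strict_total_order_rev/cheaper_order.
  + by move=> x y; rewrite /rle /= eq_sym -/(rle _ x y) rle_cheaper_lex_cost.
  + move=> mem x y s k mem_state lt_xm lt_ym.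
    by rewrite (beval_blex_cost mem_state) ?(aeval_reg mem_state).
- exists (size (ordered_fill c b (cheaper c))); split; first exact: is_ho_cheaper.
  apply: (count_prog_runs (R := lex_cost (pb_cost c))) => //.
  + exact: cheaper_order.
  + by move=> x y; rewrite rle_cheaper_lex_cost.
  + move=> mem x y s k mem_state lt_xm lt_ym.
    by rewrite (beval_blex_cost mem_state) ?(aeval_reg mem_state).
Qed.
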